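(* Let $Q$ be a QNP and let $\pi$ be a policy for $Q$. A sequence $\bar\tau=\bar s_0,\bar s_1,\dots$ is an infinite non-terminating $\pi$-trajectory of the FOND problem $P=T_D(Q)$ if and only if there is an infinite $\pi$-trajectory $\tau=s_0,s_1,\dots$ of $Q$ (an $\epsilon$-trajectory for some $\epsilon>0$) such that $\bar s_i$ is the boolean state of $s_i$ for every $i$.
   Context: A qualitative numerical problem (QNP) is a tuple $Q=\langle F,V,I,O,G\rangle$ where $F$ is a finite set of propositional variables and $V$ a finite set of numerical variables taking non-negative real values. $F$-literals are $p,\neg p$; $V$-literals are $X=0$ and $X>0$. $I$ and $G$ are consistent sets of literals. Each action $a\in O$ has a precondition $Pre(a)$ (set of $F$- and $V$-literals), propositional effects $\mathit{Eff}(a)$ (set of $F$-literals) and numerical effects $N(a)$ (atoms $Inc(X)$, $Dec(X)$, at most one per variable); if $Dec(X)\in N(a)$ then $X>0\in Pre(a)$. A state $s$ assigns truth values to $F$ and reals $s[X]\ge 0$ to $V$. Initial states satisfy $I$ under a closed-world assumption. $a$ is applicable in $s$ if $s$ satisfies $Pre(a)$. For applicable $a$, $s'\in F(a,s)$ iff the propositional effects are applied (others unchanged), $s'[X]>s[X]$ if $Inc(X)\in N(a)$, $s'[X]<s[X]$ if $Dec(X)\in N(a)$, $s'[X]=s[X]$ otherwise. A trajectory is a sequence $s_0,a_0,s_1,\dots$ with $s_0$ initial, $a_i$ applicable in $s_i$, $s_{i+1}\in F(a_i,s_i)$; for $\epsilon>0$ it is an $\epsilon$-trajectory if for all $X,i$: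 $s_{i+1}[X]\neq s_i[X]$ implies $|s_{i+1}[X]-s_i[X]|\ge\epsilon$ or $0=s_{i+1}[X]<s_i[X]<\epsilon$. The boolean state $\bar s$ of $s$ is its truth valuation on the atoms $p\in F$ and $X=0$. A policy is a partial map $\pi$ from states to actions with $\pi(s)=\pi(s')$ whenever $\bar s=\bar s'$; a $\pi$-trajectory has $a_i=\pi(s_i)$. The direct translation $T_D(Q)$ is the FOND problem over $F\cup\{p_{X=0}:X\in V\}$ obtained by reading $X=0$ as $p_{X=0}$ and $X>0$ as $\neg p_{X=0}$ in $I$, $G$, preconditions, keeping propositional effects, replacing $Inc(X)$ by the deterministic effect $\neg p_{X=0}$ and $Dec(X)$ by the nondeterministic effect $\neg p_{X=0}\mid p_{X=0}$. Its states are the boolean states of $Q$, its unique initial state is the common boolean state of the initial states of $Q$, and $\pi$ acts on it via $\bar s\mapsto \pi(s)$. A $\pi$-trajectory of $T_D(Q)$ is a sequence $\bar s_0,\bar s_1,\dots$ from the initial state with $\pi(\bar s_i)$ applicable and $\bar s_{i+1}$ a possible successor. An action of $T_D(Q)$ is a $Dec(X)$ (resp. $Inc(X)$) action if the corresponding action of $Q$ has $Dec(X)$ (resp. $Inc(X)$) in $N(a)$. For an infinite $\pi$-trajectory of $T_D(Q)$, the recurrent states are those occurring infinitely often; the trajectory is terminating if there is $X\in V$ such that $\pi(\bar s)$ is a $Dec(X)$ action for some recurrent $\bar s$ and $\pi(\bar s')$ is not an $Inc(X)$ action for any recurrent $\bar s'$; otherwise it is non-terminating. *)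

From mathcomp Require Import all_boot.
From Stdlib Require Import Reals List.

Set Implicit Arguments.
Unset Strict Implicit.
Unset Printing Implicit Defensive.

Section QNP.
Variables (F V O : finType).

(* Literals: FL p b is p (b = true) or ~p (b = false);
   VL X z is "X = 0" (z = true) or "X > 0" (z = false). *)
Inductive lit := FL (p : F) (b : bool) | VL (X : V) (z : bool).

(* A QNP <F,V,I,O,G>.  Numerical effects N(a) are given as a function
   V -> option bool: Some true = Inc(X), Some false = Dec(X), None = no effect
   (this encodes "at most one atom per variable"). *)
Record qnp := QNP {
  init : list lit;
  goal : list lit;
  pre  : O -> list lit;
  eff  : O -> list (F * bool);
  num  : O -> V -> option bool
}.

Definition consistent (l : list lit) : Prop :=
  (forall p b, In (FL p b) l -> ~ In (FL p (~~ b)) l) /\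
  (forall X z, In (VL X z) l -> ~ In (VL X (~~ z)) l).

Definition wf_qnp (Q : qnp) : Prop :=
  consistent (init Q) /\ consistent (goal Q) /\
  (forall a X, num Q a X = Some false -> In (VL X false) (pre Q a)).

Definition qstate : Type := ((F -> bool) * (V -> R))%type.

Definition valid (s : qstate) : Prop := forall X, (0 <= s.2 X)%R.

Definition holds (s : qstate) (l : lit) : Prop :=
  match l with
  | FL p b => s.1 p = b
  | VL X z => if z then s.2 X = 0%R else (0 < s.2 X)%R
  end.

(* initial states: satisfy I under the closed-world assumption *)
Definition initial (Q : qnp) (s : qstate) : Prop :=
  valid s /\
  (forall p, s.1 p = true <-> In (FL p true) (init Q)) /\
  (forall X, s.2 X = 0%R <-> In (VL X true) (init Q)).

Definition applicable (Q : qnp) (a : O) (s : qstate) : Prop :=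
  forall l, In l (pre Q a) -> holds s l.

Definition prop_step (Q : qnp) (a : O) (v v' : F -> bool) : Prop :=
  forall p,
    (In (p, true) (eff Q a) -> v' p = true) /\
    (In (p, false) (eff Q a) -> v' p = false) /\
    (~ In (p, true) (eff Q a) -> ~ In (p, false) (eff Q a) -> v' p = v p).

Definition succQ (Q : qnp) (a : O) (s s' : qstate) : Prop :=
  valid s' /\ prop_step Q a s.1 s'.1 /\
  forall X,
    match num Q a X with
    | Some true => (s.2 X < s'.2 X)%R
    | Some false => (s'.2 X < s.2 X)%R
    | None => s'.2 X = s.2 X
    end.

(* boolean states: valuation of the atoms p in F and "X = 0" for X in V *)
Definition bstate : Type := ((F -> bool) * (V -> bool))%type.

Definition bar (s : qstate) : bstate :=
  (s.1, fun X => if Req_EM_T (s.2 X) 0%R then true else false).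

Definition is_policy (pol : qstate -> option O) : Prop :=
  forall s s', valid s -> valid s' -> bar s = bar s' -> pol s = pol s'.

Definition trajQ (Q : qnp) (pol : qstate -> option O) (s : nat -> qstate) : Prop :=
  initial Q (s 0) /\
  forall i, exists a, pol (s i) = Some a /\ applicable Q a (s i) /\
                      succQ Q a (s i) (s i.+1).

Definition eps_traj (eps : R) (s : nat -> qstate) : Prop :=
  forall X i, (s i.+1).2 X <> (s i).2 X ->
    (Rabs ((s i.+1).2 X - (s i).2 X) >= eps)%R \/
    (0 = (s i.+1).2 X /\ (s i.+1).2 X < (s i).2 X /\ (s i).2 X < eps)%R.

Definition bholds (bs : bstate) (l : lit) : Prop :=
  match l with
  | FL p b => bs.1 p = b
  | VL X z => bs.2 X = z
  end.

Definition initialD (Q : qnp) (bs : bstate) : Prop :=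
  (forall p, bs.1 p = true <-> In (FL p true) (init Q)) /\
  (forall X, bs.2 X = true <-> In (VL X true) (init Q)).

Definition applicableD (Q : qnp) (a : O) (bs : bstate) : Prop :=
  forall l, In l (pre Q a) -> bholds bs l.

(* Inc(X) becomes the deterministic effect ~p_{X=0};
   Dec(X) becomes the nondeterministic effect ~p_{X=0} | p_{X=0}. *)
Definition succD (Q : qnp) (a : O) (bs bs' : bstate) : Prop :=
  prop_step Q a bs.1 bs'.1 /\
  forall X,
    match num Q a X with
    | Some true => bs'.2 X = false
    | Some false => True
    | None => bs'.2 X = bs.2 X
    end.

Definition lift (bs : bstate) : qstate :=
  (bs.1, fun X => if bs.2 X then 0%R else 1%R).

(* pi acts on T_D(Q) via  bar s |-> pi(s) *)
Definition polD (pol : qstate -> option O) (bs : bstate) : option O :=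
  pol (lift bs).

Definition trajD (Q : qnp) (pol : qstate -> option O) (bs : nat -> bstate) : Prop :=
  initialD Q (bs 0) /\
  forall i, exists a, polD pol (bs i) = Some a /\ applicableD Q a (bs i) /\
                      succD Q a (bs i) (bs i.+1).

Definition recurrent (bs : nat -> bstate) (b : bstate) : Prop :=
  forall n, exists m, (n <= m)%N /\ bs m = b.

Definition terminating (Q : qnp) (pol : qstate -> option O) (bs : nat -> bstate) : Prop :=
  exists X,
    (exists b a, recurrent bs b /\ polD pol b = Some a /\ num Q a X = Some false) /\
    (forall b a, recurrent bs b -> polD pol b = Some a -> num Q a X <> Some true).

Definition non_terminating Q pol bs : Prop := ~ terminating Q pol bs.

End QNP.

(* A trajectory of Q projects onto a trajectory of T_D(Q).  If that projection
   were terminating through a variable X, then from some step on X would never be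
   increased but would be decreased infinitely often, each time by at least eps
   (a drop to 0 would be final, contradicting a later decrement, which needs X > 0);
   this is impossible for a non-negative quantity.
   Conversely, along a non-terminating trajectory of T_D(Q) every variable X is
   either eventually never decreased or infinitely often increased.  In both cases
   the number of increments before step i plus the number of decrements from i up
   to the next increment (resp. up to the last decrement) is a natural-number
   potential that moves in the direction of each effect on X.  Using 0 where the
   boolean state says X = 0 and the potential plus one elsewhere gives integer
   values for X, hence a 1-trajectory of Q with the given boolean states. *)

From Pilot Require Import Defs.
From mathcomp Require Import all_boot zify.
From Stdlib Require Import Reals Bool Classical ClassicalEpsilon FunctionalExtensionality Lra.

Set Implicit Arguments.
Unset Strict Implicit.
Unset Printing Implicit Defensive.

Definition infinitely_often (P : nat -> Prop) : Prop :=
  forall n, exists m, (n <= m)%N /\ P m.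

Lemma not_infinitely_often (P : nat -> Prop) :
  ~ infinitely_often P -> exists M, forall m, (M <= m)%N -> ~ P m.
Proof.
move=> notIO; apply: NNPP => noM; apply: notIO => n.
apply: NNPP => nolater; apply: noM; exists n => m nm Pm.
by apply: nolater; exists m.
Qed.

Lemma eventually_recurrent (T : finType) (f : nat -> T) :
  exists M, forall j, (M <= j)%N -> infinitely_often (fun m => f m = f j).
Proof.
have [last_visit last_visitP] : exists M : T -> nat, forall c,
    infinitely_often (fun m => f m = c) \/ forall j, (M c <= j)%N -> f j <> c.
  apply: (choice (fun c M => infinitely_often (fun m => f m = c) \/
                              forall j, (M <= j)%N -> f j <> c)) => c.
  case: (classic (infinitely_often (fun m => f m = c))) => [IOc | /not_infinitely_often [M absent]].
  - by exists 0; left.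
  - by exists M; right.
exists (\max_(c : T) last_visit c) => j Hj.
case: (last_visitP (f j)) => [// | never]; case: (never j) => //.
exact: leq_trans (leq_bigmax (f j)) Hj.
Qed.

Lemma eventually_recurrent_inj (A : Type) (T : finType) (g : A -> T) (u : nat -> A) :
  injective g -> exists M, forall j, (M <= j)%N -> infinitely_often (fun m => u m = u j).
Proof.
move=> g_inj; have [M recM] := eventually_recurrent (g \o u).
exists M => j /recM IOj n; have [m [nm /= /g_inj eq_m]] := IOj n.
by exists m.
Qed.

Lemma recurrent_values_iff (A : Type) (u : nat -> A) (P : A -> Prop) :
  (exists M, forall j, (M <= j)%N -> infinitely_often (fun m => u m = u j)) ->
  (exists b, infinitely_often (fun m => u m = b) /\ P b) <-> infinitely_often (fun m => P (u m)).
Proof.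
move=> [M recM]; split=> [[b [IOb Pb]] n | IOP].
- by have [m [nm um]] := IOb n; exists m; rewrite um.
- have [m [Mm Pm]] := IOP M; exists (u m); split=> //; exact: recM.
Qed.

Definition follows (T : Type) (lt : T -> T -> Prop) (c : nat -> option bool) (x : nat -> T) :=
  forall i, match c i with
            | Some true => lt (x i) (x i.+1)
            | Some false => lt (x i.+1) (x i)
            | None => x i.+1 = x i
            end.

Definition zero_consistent (c : nat -> option bool) (z : nat -> bool) :=
  forall i, match c i with
            | Some true => z i.+1 = false
            | Some false => z i = false
            | None => z i.+1 = z i
            end.

Section NatRealization.
Variable c : nat -> option bool.

Definition incs_before (i : nat) : nat := count (fun j => c j == Some true) (iota 0 i).

Definition decs_between (i m : nat) : nat :=
  count (fun j => c j == Some false) (iota i (m - i)).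

Lemma incs_beforeS i : incs_before i.+1 = incs_before i + (c i == Some true).
Proof. by rewrite /incs_before -addn1 iotaD count_cat /= addn0. Qed.

Lemma decs_betweenS i m :
  (i < m)%N -> decs_between i m = (c i == Some false) + decs_between i.+1 m.
Proof. by move=> im; rewrite /decs_between -subnSK. Qed.

Lemma decs_between_ge i m : (m <= i)%N -> decs_between i m = 0.
Proof. by rewrite /decs_between -subn_eq0 => /eqP ->. Qed.

Lemma follows_incs_before_add (r : nat -> nat) :
  (forall i, c i <> Some true -> r i = (c i == Some false) + r i.+1) ->
  (forall i, c i = Some true -> (r i <= r i.+1)%N) ->
  follows (fun m n => m < n)%N c (fun i => incs_before i + r i).
Proof.
move=> r_step r_inc i; rewrite incs_beforeS.
case ci: (c i) => [[|]|].
- by have := r_inc i ci; rewrite eqxx; lia.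
- by rewrite (r_step i) ci //=; lia.
- by rewrite (r_step i) ci //=; lia.
Qed.

Lemma follows_exists_of_eventually_no_dec M :
  (forall j, (M <= j)%N -> c j <> Some false) ->
  exists p : nat -> nat, follows (fun m n => m < n)%N c p.
Proof.
move=> no_dec; exists (fun i => incs_before i + decs_between i M).
have r_step i : decs_between i M = (c i == Some false) + decs_between i.+1 M.
  case: (ltnP i M) => [/decs_betweenS // | Mi].
  rewrite !decs_between_ge ?(leq_trans Mi) //.
  by case: eqP => // /(no_dec i Mi).
by apply: follows_incs_before_add => i; rewrite r_step // => ->.
Qed.

Lemma follows_exists_of_inc_often :
  infinitely_often (fun j => c j = Some true) ->
  exists p : nat -> nat, follows (fun m n => m < n)%N c p.
Proof.
move=> inc_often.
have next_inc i : exists j, (i <= j) && (c j == Some true).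
  by have [j [ij /eqP cj]] := inc_often i; exists j; rewrite ij cj.
pose nxt i := ex_minn (next_inc i).
have nxtP i : [/\ (i <= nxt i)%N, c (nxt i) = Some true &
                  forall j, (i <= j)%N -> c j = Some true -> (nxt i <= j)%N].
  rewrite /nxt; case: ex_minnP => m /andP [im /eqP cm] least.
  by split=> // j ij cj; apply: least; rewrite ij cj.
exists (fun i => incs_before i + decs_between i (nxt i)).
apply: follows_incs_before_add => i ci.
- have [i_nxt c_nxt least] := nxtP i; have [i_nxt' c_nxt' least'] := nxtP i.+1.
  have lt_i_nxt : (i < nxt i)%N.
    by rewrite ltn_neqAle i_nxt andbT; apply/eqP => E; rewrite E c_nxt in ci.
  have -> : nxt i.+1 = nxt i.
    by apply/eqP; rewrite eqn_leq least' // least // ltnW.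
  exact: decs_betweenS.
- have [_ _ least] := nxtP i.
  by rewrite decs_between_ge ?least.
Qed.

Lemma follows_exists_nat :
  (infinitely_often (fun j => c j = Some false) -> infinitely_often (fun j => c j = Some true)) ->
  exists p : nat -> nat, follows (fun m n => m < n)%N c p.
Proof.
move=> dec_inc; case: (classic (infinitely_often (fun j => c j = Some false))).
- by move/dec_inc; apply: follows_exists_of_inc_often.
- by case/not_infinitely_often => M; apply: follows_exists_of_eventually_no_dec.
Qed.

Lemma follows_zero_shift (z : nat -> bool) (p : nat -> nat) :
  zero_consistent c z -> follows (fun m n => m < n)%N c p ->
  follows (fun m n => m < n)%N c (fun i => if z i then 0 else (p i).+1).
Proof.
move=> zc pf i; have := zc i; have := pf i.
case: (c i) => [[|]|] p_step z_step; rewrite z_step.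
- by case: (z i).
- by case: (z i.+1).
- by rewrite p_step.
Qed.

End NatRealization.

Definition eps_steps (eps : R) (x : nat -> R) : Prop :=
  forall i, x i.+1 <> x i ->
    (Rabs (x i.+1 - x i) >= eps)%R \/ (0 = x i.+1 /\ x i.+1 < x i /\ x i < eps)%R.

Lemma INR_dist_ge1 (m n : nat) : m <> n -> (Rabs (INR m - INR n) >= 1)%R.
Proof.
have gap k l : (k < l)%N -> (INR k + 1 <= INR l)%R.
  by move=> /ltP kl; rewrite -S_INR; apply: le_INR.
move=> /eqP; case: ltngtP => // [/gap | /gap] ? _.
- by rewrite Rabs_left1; lra.
- by rewrite Rabs_right; lra.
Qed.

Lemma eps_steps_INR (w : nat -> nat) : eps_steps 1 (fun i => INR (w i)).
Proof. by move=> i neq; left; apply: INR_dist_ge1 => E; rewrite E in neq. Qed.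

Lemma follows_INR c (w : nat -> nat) :
  follows (fun m n => m < n)%N c w -> follows Rlt c (fun i => INR (w i)).
Proof.
move=> wf i; have := wf i.
by case: (c i) => [[|]|] step; [apply/lt_INR/ltP | apply/lt_INR/ltP | rewrite step].
Qed.

Section EpsDescent.
Variables (x : nat -> R) (eps : R) (M : nat).
Hypotheses (eps_gt0 : (0 < eps)%R) (x_ge0 : forall i, (0 <= x i)%R).
Hypothesis x_noninc : forall i, (M <= i)%N -> (x i.+1 <= x i)%R.

Lemma noninc_from i j : (M <= i)%N -> (i <= j)%N -> (x j <= x i)%R.
Proof.
move=> Mi; elim: j => [|j IH]; first by rewrite leqn0 => /eqP ->; lra.
rewrite leq_eqVlt => /orP [/eqP -> | ij]; first lra.
by have := IH ij; have := x_noninc (leq_trans Mi ij); lra.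
Qed.

Lemma eps_descent_absurd :
  ~ infinitely_often (fun m => (x m.+1 <= x m - eps)%R).
Proof.
move=> drops.
have deep k : exists j, (M <= j)%N /\ (x j <= x M - INR k * eps)%R.
  elim: k => [|k [j [Mj xj]]]; first by exists M; split=> //=; lra.
  have [m [jm drop]] := drops j.
  exists m.+1; split; first exact: leq_trans Mj (leq_trans jm (leqnSn m)).
  by have := noninc_from Mj jm; rewrite S_INR; lra.
have [k xM_lt] := INR_unbounded (x M / eps).
have [j [_ xj]] := deep k; have := x_ge0 j.
have := Rmult_lt_compat_r _ _ _ eps_gt0 xM_lt.
have xM_eq : (x M / eps * eps = x M)%R by field; lra.
lra.
Qed.

End EpsDescent.

Lemma eps_follows_inc_often c (x : nat -> R) eps :
  (0 < eps)%R -> (forall i, 0 <= x i)%R -> follows Rlt c x ->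
  (forall i, c i = Some false -> (0 < x i)%R) -> eps_steps eps x ->
  infinitely_often (fun m => c m = Some false) ->
  infinitely_often (fun m => c m = Some true).
Proof.
move=> eps_gt0 x_ge0 xf dec_pos x_eps dec_often.
apply: NNPP => /not_infinitely_often [M no_inc].
have x_noninc i : (M <= i)%N -> (x i.+1 <= x i)%R.
  move=> /no_inc; have := xf i; case: (c i) => [[|]|] // step _; lra.
apply: (eps_descent_absurd eps_gt0 x_ge0 x_noninc) => n.
have [m [nMm dec_m]] := dec_often (maxn n M).
exists m; split; first exact: leq_trans (leq_maxl n M) nMm.
have Mm : (M <= m)%N := leq_trans (leq_maxr n M) nMm.
have := xf m; rewrite dec_m => x_dec.
(* A drop to 0 is excluded: [x] never rises after [M] but is positive at a later decrement. *)
have x_next_pos : (0 < x m.+1)%R.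
  have [m' [mm' dec_m']] := dec_often m.+1.
  have := noninc_from x_noninc (leq_trans Mm (leqnSn m)) mm'.
  have := dec_pos _ dec_m'; lra.
case: (x_eps m) => [|abs_ge|[x0 _]]; [lra | | lra].
by rewrite Rabs_left1 in abs_ge; lra.
Qed.

Section Translation.
Variables (F V O : finType) (Q : qnp F V O) (pol : qstate F V -> option O).

Lemma bar_zeroP (s : qstate F V) X : (bar s).2 X = true <-> s.2 X = 0%R.
Proof. by rewrite /bar /=; case: Req_EM_T. Qed.

Lemma bar_posP (s : qstate F V) X : valid s -> (bar s).2 X = false <-> (0 < s.2 X)%R.
Proof.
move=> /(_ X) s_ge0; rewrite -not_true_iff_false bar_zeroP.
split=> [|s_gt0 s0]; lra.
Qed.

Lemma bar_eq (s : qstate F V) (b : bstate F V) :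
  s.1 = b.1 -> (forall X, s.2 X = 0%R <-> b.2 X = true) -> bar s = b.
Proof.
case: b => [b1 b2] /= <- zero; rewrite /bar; congr pair.
apply: functional_extensionality => X; apply/eq_true_iff_eq.
by rewrite -zero; case: Req_EM_T.
Qed.

Lemma holds_bar (s : qstate F V) l : valid s -> holds s l <-> bholds (bar s) l.
Proof.
move=> s_ge0; case: l => [p b | X [|]] /=; first by [].
- by rewrite bar_zeroP.
- by rewrite bar_posP.
Qed.

Lemma valid_lift (b : bstate F V) : valid (Defs.lift b).
Proof. by move=> X /=; case: (b.2 X); lra. Qed.

Lemma bar_lift (b : bstate F V) : bar (Defs.lift b) = b.
Proof. by apply: bar_eq => // X /=; case: (b.2 X); split=> //; lra. Qed.

Hypothesis pol_is_policy : is_policy pol.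

Lemma polD_bar (s : qstate F V) : valid s -> polD pol (bar s) = pol s.
Proof. by move=> s_ge0; apply: pol_is_policy; rewrite ?bar_lift //; apply: valid_lift. Qed.

Definition effect (X : V) (b : bstate F V) : option bool :=
  if polD pol b is Some a then Defs.num Q a X else None.

Lemma trajQ_valid (s : nat -> qstate F V) : trajQ Q pol s -> forall i, valid (s i).
Proof. by case=> [[s0_ge0 _] step] [|i] //; have [a [_ [_ []]]] := step i. Qed.

Lemma trajQ_iff_trajD (s : nat -> qstate F V) (bs : nat -> bstate F V) :
  (forall i, valid (s i)) -> (forall i, bar (s i) = bs i) ->
  trajQ Q pol s <->
  trajD Q pol bs /\ forall X, follows Rlt (fun i => effect X (bs i)) (fun i => (s i).2 X).
Proof.
move=> s_ge0 bar_s; split.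
- case=> [[_ [initF initV]] step_s]; split; [split; [split|]|].
  + by move=> p; rewrite -bar_s; apply: initF.
  + by move=> X; rewrite -bar_s bar_zeroP; apply: initV.
  + move=> i; have [a [pol_a [app_a [_ [prop_a num_a]]]]] := step_s i.
    exists a; rewrite -!bar_s polD_bar //; split=> //; split.
      by move=> l /app_a /holds_bar; apply.
    split=> // X; have := num_a X; case: (Defs.num Q a X) => [[|]|] // step.
    * by apply/bar_posP => //; have := s_ge0 i X; lra.
    * by rewrite /bar /= step.
  + move=> X i; have [a [pol_a [_ [_ [_ num_a]]]]] := step_s i.
    by rewrite -bar_s /effect polD_bar // pol_a; apply: num_a.
- case=> [[[initF initV] step_bs] follows_s]; split.
  + split; first exact: s_ge0.
    by split=> [p | X]; [rewrite -initF -bar_s | rewrite -initV -bar_s bar_zeroP].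
  + move=> i; have [a [pol_a [app_a [prop_a _]]]] := step_bs i.
    exists a; split; first by rewrite -polD_bar // bar_s.
    split; first by move=> l /app_a; rewrite -bar_s => /holds_bar; apply.
    split; first exact: s_ge0.
    split; first by rewrite -(bar_s i) -(bar_s i.+1) in prop_a.
    by move=> X; have := follows_s X i; rewrite /effect pol_a.
Qed.

Lemma bstate_eventually_recurrent (bs : nat -> bstate F V) :
  exists M, forall j, (M <= j)%N -> recurrent bs (bs j).
Proof.
apply: (eventually_recurrent_inj (g := fun b : bstate F V => (finfun b.1, finfun b.2))).
move=> [b1 b2] [b1' b2'] [/ffunP eq1 /ffunP eq2]; congr pair.
- by apply: functional_extensionality => p; have := eq1 p; rewrite !ffunE.
- by apply: functional_extensionality => X; have := eq2 X; rewrite !ffunE.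
Qed.

Lemma non_terminatingE (bs : nat -> bstate F V) :
  non_terminating Q pol bs <->
  forall X, infinitely_often (fun m => effect X (bs m) = Some false) ->
            infinitely_often (fun m => effect X (bs m) = Some true).
Proof.
have recurrent_effect X e :
    (exists b a, recurrent bs b /\ polD pol b = Some a /\ Defs.num Q a X = Some e) <->
    infinitely_often (fun m => effect X (bs m) = Some e).
  rewrite -(recurrent_values_iff (fun b => effect X b = Some e)
                                 (bstate_eventually_recurrent bs)).
  split=> [[b [a [rec_b [pol_a num_a]]]] | [b [rec_b]]].
  - by exists b; rewrite /effect pol_a.
  - rewrite /effect; case pol_b: (polD pol b) => [a|] // num_a.
    by exists b, a.
split=> [nt X /recurrent_effect dec | dec_inc [X [dec no_inc]]].
- apply: NNPP => no_inc; apply: nt; exists X; split=> // b a rec_b pol_a inc.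
  by apply: no_inc; apply/recurrent_effect; exists b, a.
- have [b [a [rec_b [pol_a inc]]]] := (recurrent_effect X true).2
                                        (dec_inc X ((recurrent_effect X false).1 dec)).
  exact: no_inc rec_b pol_a inc.
Qed.

Hypothesis Q_wf : wf_qnp Q.

Lemma trajD_zero_consistent (bs : nat -> bstate F V) X :
  trajD Q pol bs -> zero_consistent (fun i => effect X (bs i)) (fun i => (bs i).2 X).
Proof.
case=> _ step i; have [a [pol_a [app_a [_ num_a]]]] := step i.
have := num_a X; rewrite /effect pol_a.
case num_aX: (Defs.num Q a X) => [[|]|] //= _.
by have [_ [_ dec_pre]] := Q_wf; exact: app_a _ (dec_pre _ _ num_aX).
Qed.

Lemma trajD_realization (bs : nat -> bstate F V) :
  trajD Q pol bs -> non_terminating Q pol bs ->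
  exists s : nat -> qstate F V,
    [/\ (forall i, valid (s i)), (forall i, bar (s i) = bs i),
        (forall X, follows Rlt (fun i => effect X (bs i)) (fun i => (s i).2 X))
      & eps_traj 1 s].
Proof.
move=> traj /non_terminatingE dec_inc.
have [w wP] : exists w : V -> nat -> nat, forall X,
    follows (fun m n => m < n)%N (fun i => effect X (bs i)) (w X) /\
    forall i, (w X i == 0) = (bs i).2 X.
  apply: (choice (fun X w => follows (fun m n => m < n)%N (fun i => effect X (bs i)) w /\
                             forall i, (w i == 0) = (bs i).2 X)) => X.
  have [p p_follows] := follows_exists_nat (dec_inc X).
  exists (fun i => if (bs i).2 X then 0 else (p i).+1); split.
  - exact: follows_zero_shift (trajD_zero_consistent X traj) p_follows.
  - by move=> i; case: ((bs i).2 X).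
exists (fun i => ((bs i).1, fun X => INR (w X i))); split.
- by move=> i X; apply: pos_INR.
- move=> i; apply: bar_eq => // X /=; rewrite -(proj2 (wP X) i).
  by split=> [/(@INR_eq _ 0) -> | /eqP ->].
- by move=> X; apply: follows_INR; case: (wP X).
- by move=> X; apply: eps_steps_INR.
Qed.

Lemma eps_traj_non_terminating (eps : R) (s : nat -> qstate F V) :
  (0 < eps)%R -> trajQ Q pol s -> eps_traj eps s ->
  non_terminating Q pol (fun i => bar (s i)).
Proof.
move=> eps_gt0 traj s_eps; have s_ge0 := trajQ_valid traj.
have [trajD_s s_follows] := (trajQ_iff_trajD s_ge0 (fun i => erefl)).1 traj.
apply/non_terminatingE => X.
apply: (eps_follows_inc_often eps_gt0 _ (s_follows X)) => [i | i dec |].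
- exact: s_ge0.
- have := trajD_zero_consistent X trajD_s i; rewrite /= dec.
  by move/bar_posP; apply.
- exact: s_eps.
Qed.

End Translation.

Theorem theorem3 (F V O : finType) (Q : qnp F V O) (pol : qstate F V -> option O)
  (HQ : wf_qnp Q) (Hpol : is_policy pol) (bs : nat -> bstate F V) :
  (trajD Q pol bs /\ non_terminating Q pol bs) <->
  (exists eps : R, (0 < eps)%R /\
     exists s : nat -> qstate F V,
       trajQ Q pol s /\ eps_traj eps s /\ forall i, bar (s i) = bs i).
Proof.
split=> [[traj nt] | [eps [eps_gt0 [s [traj [s_eps bar_s]]]]]].
- have [s [s_ge0 bar_s s_follows s_eps]] := trajD_realization HQ traj nt.
  exists 1%R; split; first lra.
  exists s; split=> //.
  exact/(trajQ_iff_trajD Q Hpol s_ge0 bar_s).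
- have -> : bs = (fun i => bar (s i)) by apply: functional_extensionality => i.
  have [trajD_s _] := (trajQ_iff_trajD Q Hpol (trajQ_valid traj) (fun i => erefl)).1 traj.
  split=> //; exact: (eps_traj_non_terminating Hpol HQ eps_gt0 traj s_eps).
Qed.
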